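(* Fix $M>0$ and $m\in(-1,0)$, and let $-2<a_2<a_1<0$. For $j=1,2$ let $r_j(x)=a_jx/(1+x)$, $$\alpha_{+j}=\frac{M}{r_j(M)}-\frac{r_j(M)}{2a_j r_j(m)},\qquad \beta_{+j}=\frac{M}{r_j(M)}+\frac{r_j(M)}{2a_j r_j(m)}=\frac{1+M}{a_j}+\frac{M(m+1)}{2a_jm(1+M)},$$ and assume $\beta_{+1}<0$ and $\beta_{+2}<0$. Define $z_{+j}(s)=M$ for $s\le\alpha_{+j}$, $z_{+j}(s)=M+\frac{a_j r_j(m)}{2}(s-\alpha_{+j})^2$ for $\alpha_{+j}\le s\le\beta_{+j}$, and $z_{+j}(s)=r_j(M)s$ for $\beta_{+j}\le s\le 0$. Then $z_{+1}(s)\le z_{+2}(s)$ for all $s\in[-1,0]$. *)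

From Stdlib Require Import Reals Lra.
Open Scope R_scope.

Definition rfun (a x : R) : R := a * x / (1 + x).

Definition alpha_p (a M m : R) : R :=
  M / rfun a M - rfun a M / (2 * a * rfun a m).

Definition beta_p (a M m : R) : R :=
  M / rfun a M + rfun a M / (2 * a * rfun a m).

(* z_+(s): M for s <= alpha, quadratic on [alpha, beta], r(M) s for s >= beta.
   The pieces agree at the junctions, so the first-match convention is harmless. *)
Definition z_p (a M m s : R) : R :=
  if Rle_dec s (alpha_p a M m) then M
  else if Rle_dec s (beta_p a M m) then
    M + a * rfun a m / 2 * (s - alpha_p a M m) ^ 2
  else rfun a M * s.

(** The profile [z_+j] depends on [a_j] only through a rescaling of time:
    [z_{+,c b}(s) = z_{+,b}(c s)] for [c > 0].  Hence
    [z_{+1}(s) = z_{+2}((a_1/a_2) s)], and since [0 < a_1/a_2 < 1] and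
    [s <= 0] we have [(a_1/a_2) s >= s].  The claim then follows because
    [z_{+2}] is nonincreasing: it is a constant, a concave parabola leaving
    its vertex downwards, and a line of negative slope [r_2(M)], glued
    continuously. *)

From Stdlib Require Import Reals Lra Psatz.
Open Scope R_scope.

Definition const_quad_lin (h k rho alpha beta s : R) : R :=
  if Rle_dec s alpha then h
  else if Rle_dec s beta then h + k * (s - alpha) ^ 2
  else rho * s.

Lemma z_p_const_quad_lin (a M m s : R) :
  z_p a M m s =
  const_quad_lin M (a * rfun a m / 2) (rfun a M) (alpha_p a M m) (beta_p a M m) s.
Proof. reflexivity. Qed.

Lemma const_quad_lin_nonincreasing (h k rho alpha beta s t : R) :
  alpha <= beta -> k <= 0 -> rho <= 0 -> h + k * (beta - alpha) ^ 2 = rho * beta ->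
  s <= t -> const_quad_lin h k rho alpha beta t <= const_quad_lin h k rho alpha beta s.
Proof.
intros hab hk hrho hjoin hst; unfold const_quad_lin.
assert (quad_le_h : forall y, h + k * (y - alpha) ^ 2 <= h).
{ intro y; pose proof (pow2_ge_0 (y - alpha)); nra. }
assert (quad_le : forall x y, alpha <= x <= y ->
          h + k * (y - alpha) ^ 2 <= h + k * (x - alpha) ^ 2).
{ intros x y hxy.
  assert (0 <= (y - alpha) ^ 2 - (x - alpha) ^ 2) by nra.
  nra. }
assert (lin_le_join : forall y, beta < y -> rho * y <= h + k * (beta - alpha) ^ 2)
  by (intros y hy; rewrite hjoin; nra).
destruct (Rle_dec t alpha) as [ht1|ht1];
  [destruct (Rle_dec s alpha); lra |].
destruct (Rle_dec s alpha) as [hs1|hs1]; destruct (Rle_dec s beta) as [hs2|hs2];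
  destruct (Rle_dec t beta) as [ht2|ht2]; try lra.
- apply quad_le_h.
- specialize (lin_le_join t); specialize (quad_le_h beta); lra.
- apply quad_le; lra.
- specialize (lin_le_join t); specialize (quad_le s beta); lra.
- nra.
Qed.

Lemma rfun_scale (c b x : R) : rfun (c * b) x = c * rfun b x.
Proof. unfold rfun, Rdiv; ring. Qed.

Lemma div_rfun_scale (c b M : R) : c <> 0 -> M / rfun (c * b) M = M / rfun b M / c.
Proof.
intro hc; rewrite rfun_scale; unfold Rdiv; rewrite (Rinv_mult c).
(* Hiding the inverse keeps [field] from demanding [rfun b M <> 0]. *)
set (u := / rfun b M); field; exact hc.
Qed.

Lemma vertex_offset_scale (c b M m : R) : c <> 0 ->
  rfun (c * b) M / (2 * (c * b) * rfun (c * b) m) = rfun b M / (2 * b * rfun b m) / c.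
Proof.
intro hc; rewrite !rfun_scale.
replace (2 * (c * b) * (c * rfun b m)) with (c * c * (2 * b * rfun b m)) by ring.
unfold Rdiv; rewrite (Rinv_mult (c * c)).
set (v := / (2 * b * rfun b m)); field; exact hc.
Qed.

Lemma alpha_p_scale (c b M m : R) : c <> 0 -> alpha_p (c * b) M m = alpha_p b M m / c.
Proof.
intro hc; unfold alpha_p; rewrite div_rfun_scale, vertex_offset_scale by exact hc.
unfold Rdiv; ring.
Qed.

Lemma beta_p_scale (c b M m : R) : c <> 0 -> beta_p (c * b) M m = beta_p b M m / c.
Proof.
intro hc; unfold beta_p; rewrite div_rfun_scale, vertex_offset_scale by exact hc.
unfold Rdiv; ring.
Qed.

Lemma z_p_scale (c b M m s : R) : 0 < c -> z_p (c * b) M m s = z_p b M m (c * s).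
Proof.
intro hc.
assert (le_div : forall x, s <= x / c <-> c * s <= x).
{ intro x; assert (c * (x / c) = x) by (field; lra); split; intro; nra. }
unfold z_p; rewrite alpha_p_scale, beta_p_scale, !rfun_scale by lra.
destruct (Rle_dec s (alpha_p b M m / c)) as [h1|h1];
  destruct (Rle_dec (c * s) (alpha_p b M m)) as [h1'|h1'];
  rewrite ?le_div in h1; try tauto.
destruct (Rle_dec s (beta_p b M m / c)) as [h2|h2];
  destruct (Rle_dec (c * s) (beta_p b M m)) as [h2'|h2'];
  rewrite ?le_div in h2; try tauto.
- field; lra.
- ring.
Qed.

Lemma rfun_pos (a x : R) : 0 < 1 + x -> 0 < a * x -> 0 < rfun a x.
Proof. intros; apply Rdiv_pos_pos; assumption. Qed.

Lemma rfun_neg (a x : R) : 0 < 1 + x -> a * x < 0 -> rfun a x < 0.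
Proof. intros; apply Rdiv_neg_pos; assumption. Qed.

Lemma z_p_nonincreasing (a M m s t : R) : a < 0 -> 0 < M -> -1 < m < 0 ->
  s <= t -> z_p a M m t <= z_p a M m s.
Proof.
intros ha hM hm hst; rewrite !z_p_const_quad_lin.
assert (hrM : rfun a M < 0) by (apply rfun_neg; nra).
assert (hrm : 0 < rfun a m) by (apply rfun_pos; nra).
assert (width_pos : 0 < rfun a M / (a * rfun a m)) by (apply Rdiv_neg_neg; nra).
apply const_quad_lin_nonincreasing; try nra.
- enough (beta_p a M m - alpha_p a M m = rfun a M / (a * rfun a m)) by lra.
  unfold alpha_p, beta_p; field; split; lra.
- unfold alpha_p, beta_p; field; split; lra.
Qed.

Theorem lemma3p8 (M m a1 a2 : R)
  (hM : 0 < M) (hm1 : -1 < m) (hm2 : m < 0)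
  (ha2 : -2 < a2) (ha21 : a2 < a1) (ha1 : a1 < 0)
  (hb1 : beta_p a1 M m < 0) (hb2 : beta_p a2 M m < 0) :
  forall s : R, -1 <= s <= 0 -> z_p a1 M m s <= z_p a2 M m s.
Proof.
intros s hs.
set (c := a1 / a2).
assert (hc : c * a2 = a1) by (unfold c; field; lra).
assert (hc_pos : 0 < c) by (apply Rdiv_neg_neg; lra).
rewrite <- hc, z_p_scale by exact hc_pos.
apply z_p_nonincreasing; [lra | lra | lra | nra].
Qed.
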